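(* Let $S=\langle T,\Pi,C\rangle$ be a state space and let $(A_i,\psi_i)$, $1\le i\le k$, be abstractions of $S$ forming an additive abstraction system, and let $t,g\in T$. If $h_{add}(t,g)\ge C^*_j(t_j,g_j)+R^*_j(t_j,g_j)$ for all $j\in\{1,\dots,k\}$, then $h_{add}(t,g)\ge h_{max}(t,g)$.
   Context: A state space is a weighted directed graph $S=\langle T,\Pi,C\rangle$ where $T$ is a finite set of states, $\Pi\subseteq T\times T$ is a set of directed edges, and $C:\Pi\to\mathbb{N}=\{0,1,2,\dots\}$. A path from $u$ to $v$ is a sequence of edges $\langle\pi^1,\dots,\pi^n\rangle$ with $\pi^j=(u^{j-1},u^j)\in\Pi$, $u^0=u$, $u^n=v$. An abstract state space is $A_i=\langle T_i,\Pi_i,C_i,R_i\rangle$ with $T_i$ a set of abstract states, $\Pi_i\subseteq T_i\times T_i$, and edge weights $C_i,R_i:\Pi_i\to\mathbb{N}$ (primary and residual cost), extended additively to paths. An abstraction of $S$ is a pair $(A_i,\psi_i)$ with $\psi_i:T\to T_i$ such that (1) for every $(u,v)\in\Pi$, $(\psi_i(u),\psi_i(v))\in\Pi_i$, and (2) for every $\pi=(u,v)\in\Pi$, $C_i(\pi_i)+R_i(\pi_i)\le C(\pi)$ where $\pi_i=(\psi_i(u),\psi_i(v))$. The system is additive if for every $\pi\in\Pi$, $\sum_{i=1}^k C_i(\pi_i)\le C(\pi)$. Write $t_i=\psi_i(t)$. Minima over empty sets are $+\infty$. Define $OPT_i(x,y)=\min\{C_i(\rho)+R_i(\rho):\rho\text{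 a path from }x\text{ to }y\text{ in }A_i\}$, $h_i(t,g)=OPT_i(t_i,g_i)$, $h_{max}(t,g)=\max_{1\le i\le k}h_i(t,g)$; $C^*_i(x,y)=\min\{C_i(\rho):\rho\text{ a path from }x\text{ to }y\text{ in }A_i\}$, $h_{add}(t,g)=\sum_{i=1}^k C^*_i(t_i,g_i)$; $P_i(x,y)$ is the set of paths $\rho$ from $x$ to $y$ in $A_i$ with $C_i(\rho)=C^*_i(x,y)$, and $R^*_i(x,y)=\min_{\rho\in P_i(x,y)}R_i(\rho)$ (the conditional optimal residual cost). *)

From Stdlib Require Import Classical ClassicalEpsilon.
From mathcomp Require Import all_boot.
Set Implicit Arguments. Unset Strict Implicit. Unset Printing Implicit Defensive.

(* Extended naturals: [Some n] is a finite value, [None] is +infinity. *)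
Definition enat := option nat.

Definition eadd (a b : enat) : enat :=
  match a, b with Some x, Some y => Some (x + y) | _, _ => None end.

Definition ele (a b : enat) : Prop :=
  match a, b with
  | _, None => True
  | None, Some _ => False
  | Some x, Some y => x <= y
  end.

Definition emax (a b : enat) : enat :=
  match a, b with Some x, Some y => Some (maxn x y) | _, _ => None end.

Lemma nat_min_exists (P : nat -> Prop) :
  (exists n, P n) -> exists m, P m /\ forall n, P n -> m <= n.
Proof.
move=> [n Pn]; elim: n {-2}n (leqnn n) Pn => [|N IH] n Hn Pn.
  exists n; split => // k _; move: Hn; rewrite leqn0 => /eqP ->.
  done.
case: (classic (exists k, k < n /\ P k)) => [[k [Hk Pk]]|Hno].
  by apply: (IH k) => //; rewrite -ltnS (leq_trans Hk Hn).
exists n; split => // k Pk; case: (leqP n k) => // Hk.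
by exfalso; apply: Hno; exists k.
Qed.

Definition emin (P : nat -> Prop) : enat :=
  match excluded_middle_informative (exists n, P n) with
  | left H => Some (proj1_sig (constructive_indefinite_description _
                                 (nat_min_exists H)))
  | right _ => None
  end.

(* A path from x to y in the graph with edge relation E, given as the
   sequence of visited vertices after x (the empty sequence is the empty
   path from x to x). *)
Definition is_path (V : eqType) (E : rel V) (x y : V) (p : seq V) : bool :=
  path E x p && (last x p == y).

Definition pcost (V : Type) (w : V -> V -> nat) (x : V) (p : seq V) : nat :=
  sumn (pairmap w x p).

Section Abstr.
Variables (V : eqType) (E : rel V) (Cw Rw : V -> V -> nat).

Definition OPT (x y : V) : enat :=
  emin (fun c => exists p, is_path E x y p /\ c = pcost Cw x p + pcost Rw x p).

Definition Cstar (x y : V) : enat :=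
  emin (fun c => exists p, is_path E x y p /\ c = pcost Cw x p).

Definition Rstar (x y : V) : enat :=
  emin (fun r => exists p, [/\ is_path E x y p, Some (pcost Cw x p) = Cstar x y
                              & r = pcost Rw x p]).
End Abstr.

Definition is_abstraction (T Ti : finType) (Pi : rel T) (C : T -> T -> nat)
  (Pii : rel Ti) (Ci Ri : Ti -> Ti -> nat) (psi : T -> Ti) : Prop :=
  (forall u v, Pi u v -> Pii (psi u) (psi v)) /\
  (forall u v, Pi u v -> Ci (psi u) (psi v) + Ri (psi u) (psi v) <= C u v).

Definition h_add (T : finType) (k : nat) (Ti : 'I_k -> finType)
  (Pii : forall i, rel (Ti i)) (Ci : forall i, Ti i -> Ti i -> nat)
  (psi : forall i, T -> Ti i) (t g : T) : enat :=
  foldr eadd (Some 0) [seq Cstar (Pii i) (Ci i) (psi i t) (psi i g) | i <- enum 'I_k].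

(* max over i of h_i; for k = 0 the (empty) max is taken to be 0. *)
Definition h_max (T : finType) (k : nat) (Ti : 'I_k -> finType)
  (Pii : forall i, rel (Ti i)) (Ci Ri : forall i, Ti i -> Ti i -> nat)
  (psi : forall i, T -> Ti i) (t g : T) : enat :=
  foldr emax (Some 0) [seq OPT (Pii i) (Ci i) (Ri i) (psi i t) (psi i g) | i <- enum 'I_k].

(** Every path realising C*_i(t_i, g_i) with residual cost R*_i(t_i, g_i) is a
    candidate for OPT_i(t_i, g_i), so h_i(t, g) <= C*_i + R*_i <= h_add(t, g) for
    every i; taking the maximum over i gives h_max(t, g) <= h_add(t, g). *)
From Stdlib Require Import ClassicalEpsilon.
From mathcomp Require Import all_boot.

Lemma ele_trans a b c : ele a b -> ele b c -> ele a c.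
Proof. by case: a b c => [a|] [b|] [c|] //=; exact: leq_trans. Qed.

Lemma ele_infty a : ele a None.
Proof. by case: a. Qed.

Lemma emax_ele a b c : ele a c -> ele b c -> ele (emax a b) c.
Proof. by case: a b c => [a|] [b|] [c|] //= ? ?; rewrite geq_max; apply/andP. Qed.

Lemma emin_someP (P : nat -> Prop) m : emin P = Some m -> P m.
Proof.
rewrite /emin; case: excluded_middle_informative => // exP [<-].
by case: constructive_indefinite_description => n [].
Qed.

Lemma emin_ele (P : nat -> Prop) n : P n -> ele (emin P) (Some n).
Proof.
move=> Pn; rewrite /emin; case: excluded_middle_informative => [exP|noP] /=.
  by case: constructive_indefinite_description => m /= [_]; apply.
by apply: noP; exists n.
Qed.

Lemma OPT_ele_Cstar_Rstar (V : eqType) (E : rel V) (Cw Rw : V -> V -> nat) x y :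
  ele (OPT E Cw Rw x y) (eadd (Cstar E Cw x y) (Rstar E Cw Rw x y)).
Proof.
case eqC: (Cstar E Cw x y) => [c|]; last exact: ele_infty.
case eqR: (Rstar E Cw Rw x y) => [r|]; last exact: ele_infty.
have [p [pathp]] := emin_someP _ _ eqR.
rewrite eqC => -[<-] ->.
by apply: emin_ele; exists p.
Qed.

Lemma foldr_emax_ele (s : seq enat) c :
  ele (Some 0) c -> {in s, forall a, ele a c} -> ele (foldr emax (Some 0) s) c.
Proof.
move=> le0c; elim: s => [|a s IHs] //= le_s_c.
apply: emax_ele; first exact/le_s_c/mem_head.
by apply: IHs => b sb; apply/le_s_c; rewrite inE sb orbT.
Qed.

Theorem lemma6 (T : finType) (Pi : rel T) (C : T -> T -> nat)
  (k : nat) (Ti : 'I_k -> finType) (Pii : forall i, rel (Ti i))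
  (Ci Ri : forall i, Ti i -> Ti i -> nat) (psi : forall i, T -> Ti i)
  (Habs : forall i, is_abstraction Pi C (Pii i) (Ci i) (Ri i) (psi i))
  (Hadd : forall u v, Pi u v ->
            \sum_(i < k) Ci i (psi i u) (psi i v) <= C u v)
  (t g : T)
  (Hj : forall j : 'I_k,
          ele (eadd (Cstar (Pii j) (Ci j) (psi j t) (psi j g))
                    (Rstar (Pii j) (Ci j) (Ri j) (psi j t) (psi j g)))
              (h_add Pii Ci psi t g)) :
  ele (h_max Pii Ci Ri psi t g) (h_add Pii Ci psi t g).
Proof.
apply: foldr_emax_ele; first by case: (h_add _ _ _ _ _).
move=> _ /mapP [i _ ->].
exact: ele_trans (OPT_ele_Cstar_Rstar _ _ _ _ _ _) (Hj i).
Qed.
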